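(* Let $k\ge 1$ and $\ast\in\{\Box,\circ\}$. Let $\mathcal M^\ast_{2k+1,0}\subseteq \mathcal M^\ast_{2k+1}$ be the set of those colorings whose central square $k+1$ is land. Then the map $\mathrm{red}\circ\mathrm{contr}$ is a bijection $\mathcal M^\ast_{2k+1,0}\to\mathcal N_k$.
   Context: Colorings. Each square of a square-tiled surface is colored water or land. Two distinct squares are adjacent if they share an edge after all edge identifications; a set of squares is connected if its induced adjacency graph is connected (empty set counts as connected). (N1): the water is connected. For an interior (non-boundary) vertex $v$, its square-degree is the number of distinct squares having $v$ as a corner. (N2$\Box$): no interior vertex of square-degree $4$ has all incident squares water. (N2$\circ$): no interior vertex of any square-degree has all incident squares water. A $2\times k$ Nurikabe rectangle is a coloring of the $2\times k$ grid (no identifications) with connected water and no $2\times 2$ block of water squares; $\mathcal N_k$ is the set of these. Tile $[0,n]\times[0,1]$ by unit squares $[j-1,j]\times[0,1]$, called square $j$. The $1\times n$ Möbius strip identifies $(x,1)\sim(n-x,0)$ for $x\in[0,n]$ (top edge of square $j$ glued to bottom edge of square $n+1-j$); its boundary is the image of the vertical sides. $\mathcal M^\ast_n$ is the set of colorings of the $1\times n$ Möbius strip satisfying (N1) and (N2$\ast$). Contraction: for a coloring of the $1\times(2k+1)$ Möbius strip, $\mathrm{contr}$ gives the coloring of the $1\times 2k$ Möbius strip obtained by deleting square $k+1$, with square $j\le k$ keeping position $j$ and square $j\ge k+2$ moving to position $j-1$. Rectangular reduction: for a coloring of the $1\times 2k$ Möbius strip, $\mathrm{red}$ gives the coloring of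 the $2\times k$ grid whose column $j$ ($1\le j\le k$) has top square colored as square $j$ and bottom square colored as square $2k+1-j$. *)

From mathcomp Require Import all_boot.
Unset Printing Implicit Defensive.

(* Colorings: a square colored [true] is WATER, [false] is LAND. *)

Inductive star := Box | Circ.

Definition water_connected (T : finType) (adj : rel T) (c : {ffun T -> bool}) : Prop :=
  forall x y, c x -> c y -> connect [rel u v | [&& adj u v, c u & c v]] x y.

(* ---------- 1 x n Moebius strip ----------
   Square j (1-based) of the paper is the ordinal j-1 : 'I_n.
   Two distinct squares are adjacent iff they share a vertical edge
   (consecutive squares) or the top edge of one is glued to the bottom edge
   of the other (square j with square n+1-j, i.e. ordinal i with rev_ord i). *)
Definition madj (n : nat) : rel 'I_n :=
  fun i j => (i != j) && [|| (i : nat).+1 == j, (j : nat).+1 == i | j == rev_ord i].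

(* Interior vertices: the lattice point (x,0) with 0 < x < n, which is
   identified with (n-x,1); every interior vertex has this form.
   The squares having it as a corner are squares x, x+1 (corners at (x,0))
   and n-x, n-x+1 (corners at (n-x,1)), 1-based; here 0-based. *)
Definition vsquares (n x : nat) : {set 'I_n} :=
  [set i : 'I_n | [|| (i : nat).+1 == x, (i : nat) == x,
                      (i : nat).+1 == n - x | (i : nat) == n - x]].

(* (N2 box) / (N2 circ). Square-degree of the vertex = #|vsquares n x|. *)
Definition N2 (s : star) (n : nat) (c : {ffun 'I_n -> bool}) : Prop :=
  forall x : nat, 0 < x < n ->
    (s = Box -> #|vsquares n x| = 4) ->
    ~~ [forall i in vsquares n x, c i].

Definition inM (s : star) (n : nat) (c : {ffun 'I_n -> bool}) : Prop :=
  water_connected _ (madj n) c /\ N2 s n c.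

Lemma center_lt (k : nat) : k < (k + k).+1.
Proof. by rewrite ltnS leq_addr. Qed.
Definition center (k : nat) : 'I_(k + k).+1 := Ordinal (center_lt k).

Definition inM0 (s : star) (k : nat) (c : {ffun 'I_(k + k).+1 -> bool}) : Prop :=
  inM s (k + k).+1 c /\ c (center k) = false.

(* ---------- 2 x k grid ----------
   Squares are pairs (row, column), row ord0 = top, ord_max = bottom. *)
Definition gadj (k : nat) : rel ('I_2 * 'I_k) :=
  fun p q => ((p.2 == q.2) && (p.1 != q.1)) ||
             ((p.1 == q.1) && (((p.2 : nat).+1 == q.2) || ((q.2 : nat).+1 == p.2))).

Definition top : 'I_2 := ord0.
Definition bot : 'I_2 := ord_max.

Definition no_block (k : nat) (d : {ffun 'I_2 * 'I_k -> bool}) : Prop :=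
  forall j j' : 'I_k, (j : nat).+1 = j' ->
    ~~ [&& d (top, j), d (bot, j), d (top, j') & d (bot, j')].

Definition inN (k : nat) (d : {ffun 'I_2 * 'I_k -> bool}) : Prop :=
  water_connected _ (gadj k) d /\ no_block k d.

Definition contr (k : nat) (c : {ffun 'I_(k + k).+1 -> bool}) : {ffun 'I_(k + k) -> bool} :=
  [ffun j => c (lift (center k) j)].

(* rectangular reduction: column j has top = square j, bottom = square 2k+1-j
   (1-based), i.e. ordinals j and 2k-1-j = rev_ord j. *)
Definition red (k : nat) (c : {ffun 'I_(k + k) -> bool}) : {ffun 'I_2 * 'I_k -> bool} :=
  [ffun p => if p.1 == top then c (lshift k p.2) else c (rev_ord (lshift k p.2))].

(** The composite [red \o contr] reads a coloring [c] of the 1 x (2k+1) strip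
    through an injection [grid_to_strip] of the 2 x k grid into the squares of
    the strip, whose image is everything but the central square.  This
    injection is an isomorphism of adjacency graphs onto its image, so when the
    central square is land the water of [c] and of its reduction have the same
    connectivity.  The interior vertices of square-degree 4 away from the centre
    are exactly the 2 x 2 blocks of the grid, and the two vertices next to the
    centre touch the (land) central square, so (N2) for [c] is [no_block] for
    its reduction.  Finally a coloring whose central square is land is
    determined by its values off the centre. *)

From mathcomp Require Import all_boot.
From mathcomp Require Import zify.

Lemma connect_homo (A B : finType) (eA : rel A) (eB : rel B) (f : A -> B) :
  {homo f : x y / eA x y >-> eB x y} ->
  {homo f : x y / connect eA x y >-> connect eB x y}.
Proof.
move=> hom x y /connectP [s]; elim: s x => [|z s IH] x /=; first by move=> _ ->.
by case/andP=> exz pz Ey; apply: connect_trans (connect1 (hom _ _ exz)) (IH _ pz Ey).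
Qed.

Lemma water_connected_pullback {A B : finType} {eA : rel A} {eB : rel B}
    {f : A -> B} (c : {ffun B -> bool}) :
  injective f -> (forall p q, eA p q = eB (f p) (f q)) ->
  (forall b, c b -> exists p, f p = b) ->
  water_connected A eA [ffun p => c (f p)] <-> water_connected B eB c.
Proof.
move=> f_inj eAB onto; split=> W x y.
- move=> cx cy; have [p ep] := onto _ cx; have [q eq] := onto _ cy; subst x y.
  apply: connect_homo (W p q _ _); rewrite ?ffunE //.
  by move=> u v /and3P [euv cu cv]; rewrite !ffunE in cu cv; rewrite /= -eAB euv cu cv.
- rewrite !ffunE => cx cy.
  pose g b := if [pick p | f p == b] is Some p then p else x.
  have fK : cancel f g.
    by move=> p; rewrite /g; case: pickP => [q /eqP /f_inj // | /(_ p)]; rewrite eqxx.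
  have gK b : c b -> f (g b) = b.
    by move=> /onto [p <-]; rewrite fK.
  rewrite -(fK x) -(fK y); apply: connect_homo (W _ _ cx cy).
  by move=> u v /and3P [euv cu cv]; rewrite /= eAB !ffunE !gK // euv cu cv.
Qed.

Lemma I2_top_or_bot (a : 'I_2) : a = top \/ a = bot.
Proof. case: a => [[|[|m]] lt_a2]; [left|right|by []]; exact/val_inj. Qed.

(* The bottom square of column [j] is [rev_ord j] in ['I_(k + k)], lifted past the centre. *)
Definition grid_to_strip (k : nat) (p : 'I_2 * 'I_k) : 'I_(k + k).+1 :=
  inord (if p.1 == top then p.2 : nat else k + k - p.2).

Lemma grid_to_stripE k p :
  grid_to_strip k p = (if p.1 == top then p.2 : nat else k + k - p.2) :> nat.
Proof. by rewrite inordK //; case: ifP => _; case: p => a [j lt_jk] /=; lia. Qed.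

Lemma grid_to_strip_top k j : grid_to_strip k (top, j) = j :> nat.
Proof. by rewrite grid_to_stripE. Qed.

Lemma grid_to_strip_bot k j : grid_to_strip k (bot, j) = k + k - j :> nat.
Proof. by rewrite grid_to_stripE. Qed.

Lemma red_contrE k c : red k (contr k c) = [ffun p => c (grid_to_strip k p)].
Proof.
apply/ffunP=> p; rewrite !ffunE; case: ifP => p1; congr (c _); apply/val_inj.
all: rewrite /= /bump grid_to_stripE p1; case: p p1 => a [j lt_jk] /= _.
  by rewrite leqNgt lt_jk.
have -> : k <= k + k - j.+1 by lia.
by rewrite add1n; lia.
Qed.

Lemma grid_to_strip_inj k : injective (grid_to_strip k).
Proof.
move=> [a j] [b l] /(congr1 (@nat_of_ord _)); rewrite !grid_to_stripE /=.
have := ltn_ord j; have := ltn_ord l.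
by case: (I2_top_or_bot a) => ->; case: (I2_top_or_bot b) => -> /= *;
  [|lia|lia|]; congr (_, _); apply/val_inj => /=; lia.
Qed.

Lemma grid_to_strip_neq_center k p : grid_to_strip k p != center k.
Proof.
apply/eqP=> /(congr1 (@nat_of_ord _)); rewrite grid_to_stripE.
by case: p => a [j lt_jk] /=; case: ifP; lia.
Qed.

Lemma grid_to_strip_onto k i : i != center k -> exists p, grid_to_strip k p = i.
Proof.
move=> /eqP i_c; have {}i_c : i <> k :> nat by move=> e; apply/i_c/val_inj.
have lt_ik := ltn_ord i; case: (ltnP i k) => [lt_i | le_i].
  by exists (top, Ordinal lt_i); apply/val_inj; rewrite /= grid_to_strip_top.
have lt_ri : k + k - i < k by lia.
by exists (bot, Ordinal lt_ri); apply/val_inj; rewrite /= grid_to_strip_bot /=; lia.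
Qed.

Lemma gadj_grid_to_strip k p q :
  gadj k p q = madj (k + k).+1 (grid_to_strip k p) (grid_to_strip k q).
Proof.
case: p q => a j [b l]; rewrite /gadj /madj /=.
have := ltn_ord j; have := ltn_ord l.
by case: (I2_top_or_bot a) => ->; case: (I2_top_or_bot b) => -> /=;
  rewrite -!val_eqE /= ?grid_to_strip_top ?grid_to_strip_bot; lia.
Qed.

Lemma vsquaresC n x : x <= n -> vsquares n (n - x) = vsquares n x.
Proof. by move=> le_xn; apply/setP=> i; rewrite !inE subKn //; lia. Qed.

Lemma vsquares_block k {j j' : 'I_k} : j.+1 = j' ->
  vsquares (k + k).+1 j' = grid_to_strip k @: setX [set: 'I_2] [set j; j'].
Proof.
move=> jj'; have lt_j'k := ltn_ord j'; apply/setP=> i; rewrite inE; apply/idP/imsetP.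
- case/or4P=> /eqP i_eq;
    [exists (top, j) | exists (top, j') | exists (bot, j') | exists (bot, j)];
    rewrite ?inE ?eqxx ?orbT //; apply/val_inj;
    by rewrite /= ?grid_to_strip_top ?grid_to_strip_bot; lia.
- case=> [[a l]]; rewrite !inE => /andP [_ l_jj'] ->.
  by case: (I2_top_or_bot a) => ->; case/orP: l_jj' => /= /eqP ->;
    rewrite ?grid_to_strip_top ?grid_to_strip_bot; lia.
Qed.

Lemma card_vsquares_block k {j j' : 'I_k} : j.+1 = j' -> #|vsquares (k + k).+1 j'| = 4.
Proof.
move=> jj'; rewrite (vsquares_block k jj') (card_imset _ (@grid_to_strip_inj k)).
by rewrite cardsX cardsT card_ord cards2; case: eqP => [/(congr1 (@nat_of_ord _))|]; lia.
Qed.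

Lemma all_vsquares_block k (c : {ffun 'I_(k + k).+1 -> bool}) {j j' : 'I_k} :
  j.+1 = j' ->
  [forall i in vsquares (k + k).+1 j', c i] =
  [&& c (grid_to_strip k (top, j)), c (grid_to_strip k (bot, j)),
      c (grid_to_strip k (top, j')) & c (grid_to_strip k (bot, j'))].
Proof.
move=> jj'; rewrite (vsquares_block k jj'); apply/forall_inP/and4P.
  by move=> all_c; split; apply: all_c; apply: imset_f; rewrite !inE ?eqxx ?orbT.
move=> [ctj cbj ctj' cbj'] i /imsetP [[a l]]; rewrite !inE /= => l_jj' ->.
by case: (I2_top_or_bot a) => ->; case/orP: l_jj' => /eqP ->.
Qed.

Lemma N2_no_block s k (c : {ffun 'I_(k + k).+1 -> bool}) : c (center k) = false ->
  N2 s (k + k).+1 c <-> no_block k [ffun p => c (grid_to_strip k p)].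
Proof.
move=> c_center; split=> [N j j' jj' | NB x x_int _].
  rewrite !ffunE -all_vsquares_block //; apply: N => [|_]; last exact: card_vsquares_block jj'.
  by have := ltn_ord j'; lia.
wlog le_xk : x x_int / x <= k.
  move=> le_case; case: (leqP x k) => [|lt_kx]; first exact: le_case.
  by rewrite -vsquaresC ?le_case; lia.
case: (ltnP x k) => [lt_xk | le_kx].
  have lt_jk : x.-1 < k by lia.
  have jx : (Ordinal lt_jk).+1 = Ordinal lt_xk by rewrite /=; lia.
  by have := NB _ _ jx; rewrite !ffunE -(all_vsquares_block k c jx).
apply/negP=> /forall_inP all_c; suff : c (center k) by rewrite c_center.
by apply: all_c; rewrite inE /=; lia.
Qed.

Lemma water_connected_grid_to_strip k (c : {ffun 'I_(k + k).+1 -> bool}) :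
  c (center k) = false ->
  water_connected _ (gadj k) [ffun p => c (grid_to_strip k p)] <->
  water_connected _ (madj (k + k).+1) c.
Proof.
move=> c_center; apply: water_connected_pullback (@grid_to_strip_inj k) _ _.
  exact: gadj_grid_to_strip.
by move=> i ci; apply: grid_to_strip_onto; apply: contraTneq ci => ->; rewrite c_center.
Qed.

Lemma eq_off_center k (c1 c2 : {ffun 'I_(k + k).+1 -> bool}) :
  c1 (center k) = c2 (center k) ->
  [ffun p => c1 (grid_to_strip k p)] = [ffun p => c2 (grid_to_strip k p)] -> c1 = c2.
Proof.
move=> e_center /ffunP e12; apply/ffunP=> i.
have [-> // | /grid_to_strip_onto [p <-]] := eqVneq i (center k).
by have := e12 p; rewrite !ffunE.
Qed.

Definition strip_of_grid k (d : {ffun 'I_2 * 'I_k -> bool}) : {ffun 'I_(k + k).+1 -> bool} :=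
  [ffun i => [exists p, (grid_to_strip k p == i) && d p]].

Lemma strip_of_grid_center k d : strip_of_grid k d (center k) = false.
Proof.
apply/negbTE; rewrite ffunE; apply/existsP=> -[p /andP [/eqP p_center _]].
by have := grid_to_strip_neq_center k p; rewrite p_center eqxx.
Qed.

Lemma strip_of_gridK k d : [ffun p => strip_of_grid k d (grid_to_strip k p)] = d.
Proof.
apply/ffunP=> p; rewrite !ffunE; apply/existsP/idP => [[q] | dp].
  by case/andP=> /eqP /grid_to_strip_inj ->.
by exists p; rewrite eqxx.
Qed.

Theorem lemma2p4 (k : nat) (s : star) : 1 <= k ->
  [/\ (forall c, inM0 s k c -> inN k (red k (contr k c))),
      (forall c1 c2, inM0 s k c1 -> inM0 s k c2 ->
          red k (contr k c1) = red k (contr k c2) -> c1 = c2)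
    & (forall d, inN k d -> exists c, inM0 s k c /\ red k (contr k c) = d)].
Proof.
move=> _; split.
- move=> c [[W N] c_center]; rewrite red_contrE; split.
    exact/(water_connected_grid_to_strip k _ c_center).
  exact/(N2_no_block s k c c_center).
- move=> c1 c2 [_ c1_center] [_ c2_center]; rewrite !red_contrE.
  by apply: eq_off_center; rewrite c1_center c2_center.
- move=> d [W NB]; exists (strip_of_grid k d).
  have c_center := strip_of_grid_center k d.
  rewrite red_contrE strip_of_gridK; split=> //; split=> //; split.
    by apply/(water_connected_grid_to_strip k _ c_center); rewrite strip_of_gridK.
  by apply/(N2_no_block s k _ c_center); rewrite strip_of_gridK.
Qed.
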